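(* Let $(\Lambda,m_\Lambda)$ be a separated set with multiplicity and finite height, and let $(\Gamma,m_\Gamma)\in W_{\mathbb{Z}}(\Lambda,m_\Lambda)$. Then $D^-(\Gamma,m_\Gamma)\ge D^-(\Lambda,m_\Lambda)$.
   Context: A set with multiplicity is a pair $(\Lambda,m_\Lambda)$, $\Lambda\subseteq\mathbb{R}$, $m_\Lambda:\Lambda\to\mathbb{N}$; height $N=\sup m_\Lambda$; separated means $\inf\{|\lambda-\lambda'|:\lambda\ne\lambda'\}>0$. Let $\Lambda^j=\{\lambda:m_\Lambda(\lambda)\ge j\}$, $j=1,\dots,N$. A sequence of sets $\Lambda_n$ converges weakly to $\Lambda'$ if for every bounded open interval $(a,b)$ and $\varepsilon>0$, for all large $n$: $\Lambda_n\cap(a,b)\subseteq\Lambda'+(-\varepsilon,\varepsilon)$ and $\Lambda'\cap(a,b)\subseteq\Lambda_n+(-\varepsilon,\varepsilon)$. $(\Gamma,m_\Gamma)\in W_{\mathbb{Z}}(\Lambda,m_\Lambda)$ means: there are sets $\Gamma^1,\dots,\Gamma^N$ and a sequence $(k_n)\subseteq\mathbb{Z}$ such that $\Lambda^j+k_n$ converges weakly to $\Gamma^j$ for every $j$, and $\Gamma:=\Gamma^1$, $m_\Gamma(\gamma):=\max\{j:\gamma\in\Gamma^j\}$. $D^-(\Lambda,m_\Lambda)=\liminf_{r\to\infty}\inf_{x\in\mathbb{R}}\frac{1}{2r}\sum_{\lambda\in\Lambda\cap[x-r,x+r]}m_\Lambda(\lambda)$. *)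

From HB Require Import structures.
From mathcomp Require Import all_boot all_order all_algebra.
From mathcomp Require Import all_classical all_reals ereal esum.
Set Implicit Arguments. Unset Strict Implicit. Unset Printing Implicit Defensive.
Import Order.TTheory GRing.Theory Num.Theory.
Local Open Scope classical_set_scope.
Local Open Scope ring_scope.

Section Defs.
Variable R : realType.

(* A set with multiplicity: Lam : set R, m : R -> nat (only meaningful on Lam);
   multiplicities are positive integers. *)
Definition is_mult_set (Lam : set R) (m : R -> nat) : Prop :=
  forall l, Lam l -> (1 <= m l)%N.

(* N is the height sup_{l in Lam} m l (in nat, sup of empty = 0). *)
Definition is_height (Lam : set R) (m : R -> nat) (N : nat) : Prop :=
  (forall l, Lam l -> (m l <= N)%N) /\
  (forall M : nat, (forall l, Lam l -> (m l <= M)%N) -> (N <= M)%N).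

Definition separated_set (Lam : set R) : Prop :=
  exists delta : R, 0 < delta /\
    forall l l', Lam l -> Lam l' -> l <> l' -> delta <= `|l - l'|.

Definition level (Lam : set R) (m : R -> nat) (j : nat) : set R :=
  [set l | Lam l /\ (j <= m l)%N].

Definition translate (A : set R) (k : int) : set R :=
  [set y | A (y - k%:~R)].

Definition weak_conv (L : nat -> set R) (L' : set R) : Prop :=
  forall a b eps : R, 0 < eps ->
    exists n0 : nat, forall n : nat, (n0 <= n)%N ->
      (forall x, L n x -> a < x < b -> exists y, L' y /\ `|x - y| < eps) /\
      (forall y, L' y -> a < y < b -> exists x, L n x /\ `|x - y| < eps).

Definition in_WZ (Lam : set R) (m : R -> nat) (N : nat)
    (Gam : set R) (mG : R -> nat) : Prop :=
  exists (Gs : nat -> set R) (k : nat -> int),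
    (forall j, (1 <= j <= N)%N ->
        weak_conv (fun n => translate (level Lam m j) (k n)) (Gs j)) /\
    Gam = Gs 1%N /\
    (forall g, Gam g ->
        [/\ (1 <= mG g <= N)%N, Gs (mG g) g &
            forall j, (mG g < j <= N)%N -> ~ Gs j g]).

Definition count (Lam : set R) (m : R -> nat) (x r : R) : \bar R :=
  \esum_(l in [set l | Lam l /\ x - r <= l <= x + r]) ((m l)%:R)%:E.

Definition dens_r (Lam : set R) (m : R -> nat) (r : R) : \bar R :=
  ereal_inf [set (((2 * r)^-1)%:E * count Lam m x r)%E | x in [set: R]].

(* D^-(Lam, m) = liminf_{r -> oo} dens_r r = sup_{R0 > 0} inf_{r >= R0} dens_r r *)
Definition lower_density (Lam : set R) (m : R -> nat) : \bar R :=
  ereal_sup [set ereal_inf [set dens_r Lam m r | r in [set r | R0 <= r]]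
            | R0 in [set R0 : R | 0 < R0]].

End Defs.

(* Every point of the limit configuration is a limit of translated points, so
   the limit Gamma is again separated (with half the separation constant) and
   every Gamma^j lies in Gamma.  Fix a window [x - r, x + r].  Gamma has no
   points just outside the window, so for n large enough each point l of
   Lambda with l + k_n in the window and m(l) = j is within a small distance
   of a point g of Gamma^j, which then lies in the window and has
   m_Gamma(g) >= j.  Separation of Lambda makes l |-> g injective, hence the
   window of Lambda centred at x - k_n carries no more mass than the window
   of Gamma centred at x.  Taking infima over x and then the liminf in r
   gives the inequality of lower densities. *)
From Pilot Require Import Defs.
From HB Require Import structures.
From mathcomp Require Import all_boot all_order all_algebra.
From mathcomp Require Import all_classical all_reals ereal esum.
From mathcomp Require Import ring lra.
Import Order.TTheory GRing.Theory Num.Theory.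
Set Implicit Arguments. Unset Strict Implicit.
Local Open Scope classical_set_scope.
Local Open Scope ring_scope.

Section Separation.
Variable R : realType.
Implicit Types (A B G : set R) (a b c d e x y : R).

Definition separated_by A d := forall x y, A x -> A y -> x <> y -> d <= `|x - y|.

Lemma separated_by_eq A d x y :
  separated_by A d -> A x -> A y -> `|x - y| < d -> x = y.
Proof.
move=> sepA Ax Ay xy_lt; apply: contrapT => /(sepA _ _ Ax Ay).
by rewrite leNgt xy_lt.
Qed.

Lemma separated_by_sub A B d : A `<=` B -> separated_by B d -> separated_by A d.
Proof. by move=> AB sepB x y /AB Bx /AB By; apply: sepB. Qed.

Lemma separated_by_translate A d (k : int) :
  separated_by A d -> separated_by (translate A k) d.
Proof.
move=> sepA x y Ax Ay xy.
have -> : x - y = (x - k%:~R) - (y - k%:~R) by rewrite opprB addrA subrK.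
by apply: sepA => // /addIr.
Qed.

Lemma separated_by_isolated G d c : 0 < d -> separated_by G d ->
  exists2 e, 0 < e & forall g, G g -> `|g - c| < e -> g = c.
Proof.
move=> d_gt0 sepG.
(* A point g at distance in (0, d/2) from c makes |g - c| an isolating radius:
   any closer point of G would be within d of g. *)
have [[g [Gg /andP[gc_gt0 gc_lt]]]|no_near] :=
  pselect (exists g, G g /\ 0 < `|g - c| < d / 2).
  exists `|g - c| => // g' Gg' g'c_lt; exfalso.
  have g'g : g' = g.
    apply: (separated_by_eq sepG) => //.
    by have := ler_distD c g' g; rewrite [`|c - g|]distrC; lra.
  by move: g'c_lt; rewrite g'g ltxx.
exists (d / 2) => [|g Gg gc_lt]; first lra.
apply: contrapT => gc; apply: no_near; exists g; split => //.
by rewrite gc_lt andbT normr_gt0 subr_eq0; apply/eqP.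
Qed.

Lemma separated_by_window G d a b : 0 < d -> separated_by G d ->
  exists2 e, 0 < e &
    forall y g, G g -> a <= y <= b -> `|y - g| < e -> a <= g <= b.
Proof.
move=> d_gt0 sepG.
have [ea ea_gt0 iso_a] := separated_by_isolated a d_gt0 sepG.
have [eb eb_gt0 iso_b] := separated_by_isolated b d_gt0 sepG.
have e_ea : Num.min ea eb <= ea by rewrite ge_min lexx.
have e_eb : Num.min ea eb <= eb by rewrite ge_min lexx orbT.
exists (Num.min ea eb) => [|y g Gg /andP[ay yb]]; first by rewrite lt_min ea_gt0.
rewrite ltr_distl => /andP[yg_lo yg_hi].
apply/andP; split; rewrite leNgt; apply/negP => g_out.
  have : g = a by apply: iso_a => //; rewrite ltr_distl; apply/andP; split; lra.
  by move=> ga; move: g_out; rewrite ga ltxx.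
have : g = b by apply: iso_b => //; rewrite ltr_distl; apply/andP; split; lra.
by move=> gb; move: g_out; rewrite gb ltxx.
Qed.

End Separation.

Section WeakConvergence.
Variable R : realType.
Implicit Types (L : nat -> set R) (G : set R) (d e y : R).

Lemma weak_conv_approx L G y e : weak_conv L G -> G y -> 0 < e ->
  exists n0, forall n, (n0 <= n)%N -> exists2 x, L n x & `|x - y| < e.
Proof.
move=> LG Gy e_gt0; have [n0 near_n0] := LG (y - 1) (y + 1) e e_gt0.
exists n0 => n /near_n0[_ /(_ y Gy)[]]; first by apply/andP; split; lra.
by move=> x [Lx xy]; exists x.
Qed.

Lemma weak_conv_separated L G d : (forall n, separated_by (L n) d) ->
  weak_conv L G -> separated_by G (d / 2).
Proof.
move=> sepL LG g1 g2 Gg1 Gg2 g12; rewrite leNgt; apply/negP => g12_lt.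
have g12_gt0 : 0 < `|g1 - g2| by rewrite normr_gt0 subr_eq0; apply/eqP.
have e_gt0 : 0 < `|g1 - g2| / 4 by rewrite divr_gt0.
have [n1 near1] := weak_conv_approx LG Gg1 e_gt0.
have [n2 near2] := weak_conv_approx LG Gg2 e_gt0.
have [x1 Lx1 x1g1] := near1 _ (leq_maxl n1 n2).
have [x2 Lx2 x2g2] := near2 _ (leq_maxr n1 n2).
have x12 : x1 = x2.
  apply: (separated_by_eq (sepL _) Lx1 Lx2).
  have := ler_distD g1 x1 x2; have := ler_distD g2 g1 x2.
  rewrite [`|g2 - x2|]distrC; lra.
subst x2; have := ler_distD x1 g1 g2; rewrite [`|g1 - x1|]distrC; lra.
Qed.

Lemma weak_conv_limit_sub L (L' : nat -> set R) G (G' : set R) d :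
  (forall n, L' n `<=` L n) -> weak_conv L G -> weak_conv L' G' -> 0 < d -> separated_by G d -> G' `<=` G.
Proof.
move=> L'L LG L'G' d_gt0 sepG y G'y.
have [e e_gt0 iso_y] := separated_by_isolated y d_gt0 sepG.
have e2_gt0 : 0 < e / 2 by rewrite divr_gt0.
have [n1 near1] := L'G' (y - e) (y + e) (e / 2) e2_gt0.
have [n2 near2] := LG (y - e) (y + e) (e / 2) e2_gt0.
have [_ approx_y] := near1 _ (leq_maxl n1 n2).
have y_near : y - e < y < y + e by apply/andP; split; lra.
have [x [L'x xy]] := approx_y y G'y y_near.
have x_near : y - e < x < y + e.
  by move: xy; rewrite ltr_distl => /andP[? ?]; apply/andP; split; lra.
have [approx_x _] := near2 _ (leq_maxr n1 n2).
have [g [Gg xg]] := approx_x x (L'L _ _ L'x) x_near.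
rewrite -(iso_y g Gg) //.
by have := ler_distD x g y; rewrite [`|g - x|]distrC; lra.
Qed.

Lemma uniform_threshold (P : nat -> nat -> Prop) N :
  (forall j, (j <= N)%N -> exists n0, forall n, (n0 <= n)%N -> P j n) ->
  exists n0, forall j, (j <= N)%N -> forall n, (n0 <= n)%N -> P j n.
Proof.
elim: N => [|N IH] thresholds.
  have [n0 P0] := thresholds 0%N (leqnn 0).
  by exists n0 => j; rewrite leqn0 => /eqP->.
have [n1 P_le] := IH (fun j jN => thresholds j (leqW jN)).
have [n2 P_N1] := thresholds N.+1 (leqnn _).
exists (maxn n1 n2) => j; rewrite leq_eqVlt ltnS => /orP[/eqP->|jN] n.
  by rewrite geq_max => /andP[_]; apply: P_N1.
by rewrite geq_max => /andP[n1n _]; apply: P_le.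
Qed.

End WeakConvergence.

Section ExtendedSums.
Variables (R : realType) (T : choiceType).
Implicit Types (A B : set T) (w : T -> \bar R).

Lemma esum_subset A B w : A `<=` B ->
  (\esum_(i in A) w i <= \esum_(i in B) w i)%E.
Proof.
move=> AB; apply: ge_ereal_sup => _ [X [finX XA] <-]; apply: esum_ge.
by exists X => //; split => //; apply: subset_trans AB.
Qed.

Lemma esum_le_matching A B (wA wB : T -> \bar R) (match_to : T -> T -> Prop) :
  (forall a, A a -> exists b, [/\ B b, (wA a <= wB b)%E & match_to a b]) ->
  (forall a a' b, A a -> A a' -> match_to a b -> match_to a' b -> a = a') ->
  (\esum_(i in A) wA i <= \esum_(i in B) wB i)%E.
Proof.
move=> matching match_inj.
have /choice[f f_match] : forall a, exists b,
    A a -> [/\ B b, (wA a <= wB b)%E & match_to a b].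
  move=> a; have [Aa|nAa] := pselect (A a).
    by have [b ?] := matching a Aa; exists b.
  by exists a.
apply: (@le_trans _ _ (\esum_(i in A) wB (f i))).
  by apply: le_esum => a /f_match[].
rewrite -esum_image.
  by apply: esum_subset => _ [a /f_match[Bfa _ _] <-].
move=> a a'; rewrite !inE => Aa Aa' fa_fa'.
have [_ _ a_fa] := f_match a Aa; have [_ _ a'_fa'] := f_match a' Aa'.
by apply: (match_inj a a' (f a)); rewrite // fa_fa'.
Qed.

End ExtendedSums.

Section TranslationLimit.
Variables (R : realType) (Lam : set R) (m : R -> nat) (N : nat) (d : R).
Variables (Gs : nat -> set R) (k : nat -> int) (Gam : set R) (mG : R -> nat).
Hypothesis m_ge1 : is_mult_set Lam m.
Hypothesis m_leN : forall l, Lam l -> (m l <= N)%N.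
Hypothesis d_gt0 : 0 < d.
Hypothesis Lam_sep : separated_by Lam d.
Hypothesis Gs_lim : forall j, (1 <= j <= N)%N ->
  weak_conv (fun n => translate (level Lam m j) (k n)) (Gs j).
Hypothesis Gam_Gs1 : Gam = Gs 1%N.
Hypothesis mG_max : forall g, Gam g ->
  [/\ (1 <= mG g <= N)%N, Gs (mG g) g & forall j, (mG g < j <= N)%N -> ~ Gs j g].

Let shifted_level j n := translate (level Lam m j) (k n).

Lemma shifted_level_separated j n : separated_by (shifted_level j n) d.
Proof.
by apply: separated_by_translate; apply: separated_by_sub Lam_sep => l [].
Qed.

Lemma shifted_level_sub j n : (1 <= j)%N -> shifted_level j n `<=` shifted_level 1 n.
Proof. by move=> j_ge1 y [Ly _]; split => //; apply: m_ge1. Qed.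

Lemma Gam_separated : separated_by Gam (d / 2).
Proof.
move=> g1 g2 Gg1; have [/andP[g1_ge1 g1_leN] _ _] := mG_max Gg1.
move: Gg1; rewrite Gam_Gs1; apply: (@weak_conv_separated _ (shifted_level 1)).
  by move=> n; apply: shifted_level_separated.
by apply: Gs_lim; rewrite leqnn (leq_trans g1_ge1).
Qed.

Lemma Gs_sub_Gam j : (1 <= j <= N)%N -> Gs j `<=` Gam.
Proof.
move=> /andP[j_ge1 j_leN]; rewrite Gam_Gs1.
apply: (@weak_conv_limit_sub _ (shifted_level 1) (shifted_level j) _ _ (d / 2)).
- by move=> n; apply: shifted_level_sub.
- by apply: Gs_lim; rewrite leqnn (leq_trans j_ge1).
- by apply: Gs_lim; rewrite j_ge1.
- by rewrite divr_gt0.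
- by rewrite -Gam_Gs1; apply: Gam_separated.
Qed.

Lemma shift_matching x r : exists kk : R, forall a, Lam a ->
  x - r <= a + kk <= x + r ->
  exists g, [/\ Gam g, x - r <= g <= x + r, (m a <= mG g)%N & `|a + kk - g| < d / 2].
Proof.
have d2_gt0 : 0 < d / 2 by rewrite divr_gt0.
have [e0 e0_gt0 window] := separated_by_window (x - r) (x + r) d2_gt0 Gam_separated.
pose e := Num.min e0 (d / 2).
have e_e0 : e <= e0 by rewrite ge_min lexx.
have e_d2 : e <= d / 2 by rewrite ge_min lexx orbT.
have e_gt0 : 0 < e by rewrite lt_min e0_gt0.
have [|n0 approx] := @uniform_threshold (fun j n => (1 <= j)%N ->
    forall y, shifted_level j n y -> x - r - 1 < y < x + r + 1 ->
    exists g, Gs j g /\ `|y - g| < e) N.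
  move=> j j_leN; have [->|j_gt0] := posnP j; first by exists 0%N.
  have j_range : (1 <= j <= N)%N by rewrite j_gt0.
  have [n0 near_n0] := Gs_lim j_range (x - r - 1) (x + r + 1) e_gt0.
  by exists n0 => n /near_n0[approx _] _.
exists (k n0)%:~R => a La /andP[a_lo a_hi].
have ma_ge1 := m_ge1 La; have ma_leN := m_leN La.
have a_lev : shifted_level (m a) n0 (a + (k n0)%:~R).
  by rewrite /shifted_level /translate /= addrK; split.
have a_near : x - r - 1 < a + (k n0)%:~R < x + r + 1 by apply/andP; split; lra.
have [g [Gs_g ag]] := approx _ ma_leN _ (leqnn _) ma_ge1 _ a_lev a_near.
have Gam_g : Gam g by apply: (Gs_sub_Gam (j := m a)); rewrite ?ma_ge1.
exists g; split => //.
- by apply: (window (a + (k n0)%:~R)) => //; [rewrite a_lo a_hi|lra].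
- rewrite leqNgt; apply/negP => mg_lt; have [_ _ no_higher] := mG_max Gam_g.
  by apply: (no_higher (m a)) => //; rewrite mg_lt.
- lra.
Qed.

Lemma count_le_shift (x r : R) :
  exists x', (Defs.count Lam m x' r <= Defs.count Gam mG x r)%E.
Proof.
have [kk matching] := shift_matching x r.
exists (x - kk).
apply: (esum_le_matching (match_to := fun a g => `|a + kk - g| < d / 2)).
  move=> a [La /andP[a_lo a_hi]].
  have [|g [Gam_g g_win ma_le ag]] := matching a La; first by apply/andP; split; lra.
  by exists g; split => //; rewrite lee_fin ler_nat.
move=> a a' g [La _] [La' _] ag a'g; apply: (separated_by_eq Lam_sep La La').
have -> : a - a' = (a + kk - g) - (a' + kk - g) by ring.
by have := ler_normB (a + kk - g) (a' + kk - g); lra.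
Qed.

End TranslationLimit.

Section LowerDensity.
Variable R : realType.
Implicit Types (L G : set R) (mL mG : R -> nat).

Lemma dens_r_le L mL G mG r : 0 <= r ->
  (forall x, exists x', (Defs.count L mL x' r <= Defs.count G mG x r)%E) ->
  (dens_r L mL r <= dens_r G mG r)%E.
Proof.
move=> r_ge0 count_le; apply: le_ereal_inf_tmp => _ [x _ <-].
have [x' x'_le] := count_le x.
apply: (@le_trans _ _ (((2 * r)^-1)%:E * Defs.count L mL x' r)%E).
  by apply: ereal_inf_lbound; exists x'.
by apply: lee_wpmul2l => //; rewrite lee_fin invr_ge0 mulr_ge0.
Qed.

Lemma lower_density_le L mL G mG :
  (forall r, 0 < r -> (dens_r L mL r <= dens_r G mG r)%E) ->
  (lower_density L mL <= lower_density G mG)%E.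
Proof.
move=> dens_le; apply: ge_ereal_sup => _ [R0 R0_gt0 <-].
apply: (@le_trans _ _ (ereal_inf [set dens_r G mG r | r in [set r | R0 <= r]])).
  apply: le_ereal_inf_tmp => _ [r R0_le_r <-].
  apply: (@le_trans _ _ (dens_r L mL r)); first by apply: ereal_inf_lbound; exists r.
  by apply: dens_le; apply: lt_le_trans R0_le_r.
by apply: ereal_sup_ubound; exists R0.
Qed.

End LowerDensity.

Theorem lemma3p3 (R : realType) (Lam : set R) (m : R -> nat) (N : nat)
    (Gam : set R) (mG : R -> nat) :
  is_mult_set Lam m -> separated_set Lam -> is_height Lam m N ->
  in_WZ Lam m N Gam mG ->
  (lower_density Gam mG >= lower_density Lam m)%E.
Proof.
move=> m_ge1 [d [d_gt0 Lam_sep]] [m_leN _] [Gs [k [Gs_lim [Gam_Gs1 mG_max]]]].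
apply: lower_density_le => r r_gt0; apply: dens_r_le; first exact: ltW.
move=> x; exact: (count_le_shift m_ge1 m_leN d_gt0 Lam_sep Gs_lim Gam_Gs1 mG_max x r).
Qed.
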